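(* Let $d\geqslant1$, let $F$ be a finite abelian group and $G=\mathbb{Z}^d\times F$. Let $A$ be a nonempty subset of $\mathbb{Z}^d$ which has a minimal complement in $\mathbb{Z}^d$. Then for every nonempty subset $H\subseteq F$, the set $A\times H$ has a minimal complement in $G$.
   Context: A nonempty $M$ is a complement of $W$ in an abelian group $G$ if $W+M=G$; it is a minimal complement if no proper subset of $M$ is a complement of $W$. *)

From mathcomp Require Import all_boot all_algebra.
Set Implicit Arguments. Unset Strict Implicit. Unset Printing Implicit Defensive.
Import GRing.Theory.
Local Open Scope ring_scope.

Definition is_complement (G : zmodType) (W M : G -> Prop) : Prop :=
  (exists m, M m) /\ (forall g : G, exists w m, W w /\ M m /\ g = w + m).

Definition is_min_complement (G : zmodType) (W M : G -> Prop) : Prop :=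
  is_complement W M /\
  (forall M' : G -> Prop, (forall x, M' x -> M x) -> is_complement W M' ->
     forall x, M x -> M' x).

Definition has_min_complement (G : zmodType) (W : G -> Prop) : Prop :=
  exists M : G -> Prop, is_min_complement W M.

Definition setprod (T U : Type) (A : T -> Prop) (H : U -> Prop) : T * U -> Prop :=
  fun g => A g.1 /\ H g.2.

(** Every point m0 of a minimal complement M of A is essential: some z is
    written as a + m with A a and M m only for m = m0.  So if M' is a
    complement of A x H contained in M x N, covering the points (z, f) forces
    the fibre {n | M' (m0, n)} to be a complement of H inside N, hence to
    contain all of N by minimality; thus M x N is a minimal complement of
    A x H.  In the finite group F a nonempty H has a minimal complement,
    namely a complement of least cardinality. *)

From mathcomp Require Import all_boot all_algebra.
From mathcomp Require Import boolp.

Set Implicit Arguments.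
Unset Strict Implicit.
Unset Printing Implicit Defensive.
Import GRing.Theory.
Local Open Scope ring_scope.

Lemma is_complement_full (G : zmodType) (W : G -> Prop) :
  (exists w, W w) -> is_complement W (fun _ => True).
Proof.
move=> [w Ww]; split; first by exists 0.
by move=> g; exists w, (g - w); rewrite addrC subrK.
Qed.

Lemma is_complement_ext (G : zmodType) (W M M' : G -> Prop) :
  (forall x, M x <-> M' x) -> is_complement W M -> is_complement W M'.
Proof.
move=> eqM [[m Mm] cM]; split; first by exists m; apply/eqM.
by move=> g; have [w [m' [Ww [/eqM M'm' ->]]]] := cM g; exists w, m'.
Qed.

Lemma complement_sub_min_complement (G : finZmodType) (W M : G -> Prop) :
  is_complement W M ->
  exists M0, (forall x, M0 x -> M x) /\ is_min_complement W M0.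
Proof.
move=> cM.
pose P (S : {set G}) :=
  `[< is_complement W (fun x => x \in S) /\ forall x, x \in S -> M x >].
have PM : P [set x | `[< M x >]].
  apply/asboolP; split; last by move=> x; rewrite inE => /asboolP.
  by apply: is_complement_ext cM => x; rewrite inE; split => /asboolP.
case: (arg_minnP (fun S : {set G} => #|S|) PM) => S /asboolP [cS SM] S_min.
exists (fun x => x \in S); split=> //; split=> // M' M'S cM' x Sx.
apply: contrapT => nM'x.
pose S' := [set y | `[< M' y >]].
have S'S : S' \proper S.
  apply/properP; split; last by exists x; rewrite // inE; apply/asboolP.
  by apply/subsetP => y; rewrite inE => /asboolP /M'S.
have cS' : is_complement W (fun x => x \in S').
  by apply: is_complement_ext cM' => y; rewrite inE; split => /asboolP.
have PS' : P S'.
  by apply/asboolP; split=> // y /(subsetP (proper_sub S'S)) /SM.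
by have := S_min _ PS'; rewrite leqNgt proper_card.
Qed.

Lemma finite_has_min_complement (G : finZmodType) (W : G -> Prop) :
  (exists w, W w) -> has_min_complement W.
Proof.
move=> /is_complement_full /complement_sub_min_complement [M [_ minM]].
by exists M.
Qed.

Lemma min_complement_essential (G : zmodType) (W M : G -> Prop) (m0 : G) :
  is_min_complement W M -> M m0 ->
  exists z, forall w m, W w -> M m -> z = w + m -> m = m0.
Proof.
move=> [_ minM] Mm0; apply: contrapT => no_witness.
have only_m0 g : exists w m, W w /\ (M m /\ m <> m0) /\ g = w + m.
  apply: contrapT => not_g; apply: no_witness; exists g => w m Ww Mm eg.
  by apply: contrapT => ne; apply: not_g; exists w, m.
have cM0 : is_complement W (fun m => M m /\ m <> m0).
  by split=> //; have [_ [m [_ [Mm _]]]] := only_m0 0; exists m.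
by have [] := minM _ (fun m => @proj1 _ _) cM0 m0 Mm0.
Qed.

Section ProductComplement.

Variables (G1 G2 : zmodType) (A M : G1 -> Prop) (H N : G2 -> Prop).

Lemma setprod_complement :
  is_complement A M -> is_complement H N ->
  is_complement (G := (G1 * G2)%type) (setprod A H) (setprod M N).
Proof.
move=> [[m Mm] cM] [[n Nn] cN]; split; first by exists (m, n).
move=> [g1 g2]; have [a [m' [Aa [Mm' ->]]]] := cM g1.
by have [h [n' [Hh [Nn' ->]]]] := cN g2; exists (a, h), (m', n').
Qed.

Lemma setprod_min_complement :
  is_min_complement A M -> is_min_complement H N ->
  is_min_complement (G := (G1 * G2)%type) (setprod A H) (setprod M N).
Proof.
move=> minM [cN minN]; split; first exact: setprod_complement minM.1 cN.
move=> M' M'MN cM' [m0 n0] [Mm0 Nn0].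
have [z z_only_m0] := min_complement_essential minM Mm0.
pose N' n := M' (m0, n).
have fibre_covers f : exists h n, H h /\ N' n /\ f = h + n.
  have [[a h] [[m n] [[Aa Hh] [M'mn [ez ef]]]]] := cM'.2 (z, f).
  have em := z_only_m0 a m Aa (M'MN _ M'mn).1 ez; subst m.
  by exists h, n.
have cN' : is_complement H N'.
  by split=> //; have [_ [n [_ [N'n _]]]] := fibre_covers 0; exists n.
exact: minN N' (fun n N'n => (M'MN _ N'n).2) cN' n0 Nn0.
Qed.

End ProductComplement.

Theorem lemma5p5 (d : nat) (F : finZmodType) (A : 'rV[int]_d -> Prop)
  (H : F -> Prop) :
  (1 <= d)%N ->
  (exists a, A a) ->
  has_min_complement A ->
  (exists h, H h) ->
  has_min_complement (G := ('rV[int]_d * F)%type) (setprod A H).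
Proof.
move=> _ _ [M minM] /finite_has_min_complement [N minN].
by exists (setprod M N); apply: setprod_min_complement.
Qed.
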